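(* Let $\mathcal{A}$ be a semi-abelian category, and let $m:I\to A$ be a kernel (equivalently, a normal monic) in $\mathcal{A}$. The following are equivalent: (1) $m$ is an essential monic; (2) whenever $f:A\to B$ is an arrow such that $fm$ is a normal monic, $f$ is monic; (3) if $g:J\to A$ is a normal monic with $g\perp m$, then $g=0$ (i.e. $J$ is a zero object).
   Context: In a semi-abelian category, normal monics coincide with kernels; the ideals of an object $A$ are the subobjects of $A$ represented by normal monics with target $A$, and they form a bounded lattice. For normal monics (ideals) $g,m$ with target $A$, write $g\perp m$ if their meet in the lattice of ideals of $A$ is $0$ (equivalently, the pullback of $g$ and $m$ is a zero object). An arrow $m$ is an essential monic if $m$ is monic and for every arrow $g$ such that $gm$ is defined and monic, $g$ is monic. *)

Record Cat := {
  Ob :> Type;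
  Hom : Ob -> Ob -> Type;
  idm : forall a, Hom a a;
  comp : forall a b c, Hom b c -> Hom a b -> Hom a c;
  comp_id_l : forall a b (f : Hom a b), comp a b b (idm b) f = f;
  comp_id_r : forall a b (f : Hom a b), comp a a b f (idm a) = f;
  comp_assoc : forall a b c d (h : Hom c d) (g : Hom b c) (f : Hom a b),
      comp a c d h (comp a b c g f) = comp a b d (comp b c d h g) f
}.

Arguments Hom : clear implicits.
Arguments idm {c0} a.
Arguments comp {c0 a b c} _ _.

Declare Scope cat_scope.
Notation "g ∘ f" := (comp g f) (at level 40, left associativity) : cat_scope.
Open Scope cat_scope.

Section Notions.
Variable C : Cat.

Definition monic {a b : C} (f : Hom C a b) : Prop :=
  forall x (u v : Hom C x a), f ∘ u = f ∘ v -> u = v.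

Definition is_iso {a b : C} (f : Hom C a b) : Prop :=
  exists g : Hom C b a, g ∘ f = idm a /\ f ∘ g = idm b.

Definition is_initial (Z : C) : Prop :=
  forall X : C, (exists f : Hom C Z X, True) /\ (forall f g : Hom C Z X, f = g).
Definition is_terminal (Z : C) : Prop :=
  forall X : C, (exists f : Hom C X Z, True) /\ (forall f g : Hom C X Z, f = g).
Definition is_zero_obj (Z : C) : Prop := is_initial Z /\ is_terminal Z.

Definition pointed : Prop := exists Z : C, is_zero_obj Z.

Definition zero_arrow {a b : C} (f : Hom C a b) : Prop :=
  exists (Z : C) (z1 : Hom C a Z) (z2 : Hom C Z b), is_zero_obj Z /\ f = z2 ∘ z1.

Definition is_pullback {a b c : C} (f : Hom C a c) (g : Hom C b c)
    (P : C) (p1 : Hom C P a) (p2 : Hom C P b) : Prop :=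
  f ∘ p1 = g ∘ p2 /\
  forall (Q : C) (q1 : Hom C Q a) (q2 : Hom C Q b), f ∘ q1 = g ∘ q2 ->
    exists u : Hom C Q P, p1 ∘ u = q1 /\ p2 ∘ u = q2 /\
      forall v : Hom C Q P, p1 ∘ v = q1 -> p2 ∘ v = q2 -> v = u.

Definition has_pullbacks : Prop :=
  forall (a b c : C) (f : Hom C a c) (g : Hom C b c),
    exists (P : C) (p1 : Hom C P a) (p2 : Hom C P b), is_pullback f g P p1 p2.

Definition has_terminal : Prop := exists T : C, is_terminal T.

Definition finitely_complete : Prop := has_terminal /\ has_pullbacks.

Definition is_coequalizer {a b c : C} (f g : Hom C a b) (q : Hom C b c) : Prop :=
  q ∘ f = q ∘ g /\
  forall (d : C) (h : Hom C b d), h ∘ f = h ∘ g ->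
    exists u : Hom C c d, u ∘ q = h /\ forall v : Hom C c d, v ∘ q = h -> v = u.

Definition regular_epi {b c : C} (q : Hom C b c) : Prop :=
  exists (a : C) (f g : Hom C a b), is_coequalizer f g q.

Definition regular : Prop :=
  finitely_complete /\
  (forall (a b : C) (f : Hom C a b) (P : C) (p1 p2 : Hom C P a),
      is_pullback f f P p1 p2 ->
      exists (Q : C) (q : Hom C a Q), is_coequalizer p1 p2 q) /\
  (forall (a b c : C) (q : Hom C a c) (g : Hom C b c)
          (P : C) (p1 : Hom C P a) (p2 : Hom C P b),
      regular_epi q -> is_pullback q g P p1 p2 -> regular_epi p2).

Definition equivalence_relation {X R : C} (r1 r2 : Hom C R X) : Prop :=
  (forall (Y : C) (u v : Hom C Y R), r1 ∘ u = r1 ∘ v -> r2 ∘ u = r2 ∘ v -> u = v) /\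
  (exists d : Hom C X R, r1 ∘ d = idm X /\ r2 ∘ d = idm X) /\
  (exists s : Hom C R R, r1 ∘ s = r2 /\ r2 ∘ s = r1) /\
  (forall (P : C) (p1 p2 : Hom C P R), is_pullback r2 r1 P p1 p2 ->
     exists t : Hom C P R, r1 ∘ t = r1 ∘ p1 /\ r2 ∘ t = r2 ∘ p2).

Definition effective {X R : C} (r1 r2 : Hom C R X) : Prop :=
  exists (Y : C) (f : Hom C X Y), is_pullback f f R r1 r2.

Definition exact : Prop :=
  regular /\
  forall (X R : C) (r1 r2 : Hom C R X), equivalence_relation r1 r2 -> effective r1 r2.

Definition is_kernel {K A B : C} (k : Hom C K A) (f : Hom C A B) : Prop :=
  zero_arrow (f ∘ k) /\
  forall (X : C) (x : Hom C X A), zero_arrow (f ∘ x) ->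
    exists y : Hom C X K, k ∘ y = x /\ forall y' : Hom C X K, k ∘ y' = x -> y' = y.

Definition normal_monic {K A : C} (k : Hom C K A) : Prop :=
  exists (B : C) (f : Hom C A B), is_kernel k f.

(* Bourn protomodularity, in its pointed form: the split short five lemma *)
Definition protomodular : Prop :=
  forall (K A B K' A' B' : C)
         (k : Hom C K A) (p : Hom C A B) (s : Hom C B A)
         (k' : Hom C K' A') (p' : Hom C A' B') (s' : Hom C B' A')
         (u : Hom C K K') (v : Hom C A A') (w : Hom C B B'),
    is_kernel k p -> p ∘ s = idm B ->
    is_kernel k' p' -> p' ∘ s' = idm B' ->
    v ∘ k = k' ∘ u -> p' ∘ v = w ∘ p -> v ∘ s = s' ∘ w ->
    is_iso u -> is_iso w -> is_iso v.

Definition is_coproduct {a b : C} (S : C) (i1 : Hom C a S) (i2 : Hom C b S) : Prop :=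
  forall (X : C) (f : Hom C a X) (g : Hom C b X),
    exists h : Hom C S X, h ∘ i1 = f /\ h ∘ i2 = g /\
      forall h' : Hom C S X, h' ∘ i1 = f -> h' ∘ i2 = g -> h' = h.

Definition has_binary_coproducts : Prop :=
  forall a b : C, exists (S : C) (i1 : Hom C a S) (i2 : Hom C b S), is_coproduct S i1 i2.

Definition semi_abelian : Prop :=
  pointed /\ exact /\ protomodular /\ has_binary_coproducts.

Definition essential_monic {I A : C} (m : Hom C I A) : Prop :=
  monic m /\ forall (X : C) (g : Hom C A X), monic (g ∘ m) -> monic g.

Definition perp {J I A : C} (g : Hom C J A) (m : Hom C I A) : Prop :=
  forall (P : C) (p1 : Hom C P J) (p2 : Hom C P I),
    is_pullback g m P p1 p2 -> is_zero_obj P.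

End Notions.

Arguments monic {C a b} f.
Arguments is_iso {C a b} f.
Arguments zero_arrow {C a b} f.
Arguments is_pullback {C a b c} f g P p1 p2.
Arguments is_coequalizer {C a b c} f g q.
Arguments regular_epi {C b c} q.
Arguments equivalence_relation {C X R} r1 r2.
Arguments effective {C X R} r1 r2.
Arguments is_kernel {C K A B} k f.
Arguments normal_monic {C K A} k.
Arguments is_coproduct {C a b} S i1 i2.
Arguments essential_monic {C I A} m.
Arguments perp {C J I A} g m.

From Stdlib Require Import Setoid.

(* For (3) ⇒ (1): if [h ∘ m] is monic then [ker h ⊥ m], so
   [ker h = 0] and, by protomodularity, [h] is monic.  For (2) ⇒ (3): let [g = ker φ] and
   [m = ker ψ] with [g ⊥ m], and let [q] be the coequalizer of the kernel pair of [φ].  Then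
   [q ∘ g = 0], and [q ∘ m] is monic because [g ⊥ m].  It is also normal: the image of the
   kernel pair of [ψ] under [q × q] is an equivalence relation (transitive because kernel
   pairs commute in a protomodular regular category), hence effective, and its zero class
   is [q ∘ m].  So (2) makes [q] monic, and [q ∘ g = 0] forces [g = 0].  All uses of
   protomodularity go through one fact: a monic containing both the kernel and a section of
   a split epi is an isomorphism. *)

Definition factors_through {C : Cat} {X N P : C} (n : Hom C N P) (x : Hom C X P) : Prop :=
  exists y : Hom C X N, n ∘ y = x.

Definition jointly_monic {C : Cat} {X A B : C} (f : Hom C X A) (g : Hom C X B) : Prop :=
  forall Y (u v : Hom C Y X), f ∘ u = f ∘ v -> g ∘ u = g ∘ v -> u = v.

Definition locally_factors {C : Cat} {X D P : C} (f : Hom C D P) (x : Hom C X P) : Prop :=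
  exists Y (c : Hom C Y X) (y : Hom C Y D), regular_epi c /\ f ∘ y = x ∘ c.

Ltac comp_normalize :=
  repeat rewrite comp_assoc; repeat rewrite comp_id_l; repeat rewrite comp_id_r.

(* An equation [l = r] with [l] a composite does not rewrite inside a left-associated
   composite [x ∘ l1 ∘ l2]; its postcomposed form [forall x, x ∘ l1 ∘ l2 = x ∘ r] does. *)
Ltac rewrite_comp H :=
  let H' := fresh in
  pose proof (fun W (x : Hom _ _ W) => f_equal (comp x) H) as H';
  repeat setoid_rewrite comp_assoc in H';
  first [rewrite H' | rewrite H]; clear H'.

Section SemiAbelian.

Variable C : Cat.

Lemma zero_arrow_unique {X Y : C} (f g : Hom C X Y) :
  zero_arrow f -> zero_arrow g -> f = g.
Proof.
  intros [Z1 [z1 [z2 [H1 ->]]]] [Z2 [w1 [w2 [H2 ->]]]].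
  destruct (proj1 (proj1 H2 Z1)) as [t _].
  assert (E1 : z1 = t ∘ w1) by apply (proj2 (proj2 H1 X)).
  assert (E2 : z2 ∘ t = w2) by apply (proj2 (proj1 H2 Y)).
  rewrite E1, comp_assoc, E2. reflexivity.
Qed.

Lemma zero_arrow_postcomp {X Y W : C} (g : Hom C Y W) (f : Hom C X Y) :
  zero_arrow f -> zero_arrow (g ∘ f).
Proof.
  intros [Z0 [z1 [z2 [HZ0 ->]]]]. exists Z0, z1, (g ∘ z2).
  split; [exact HZ0 | apply comp_assoc].
Qed.

Lemma zero_arrow_precomp {X Y W : C} (f : Hom C X Y) (h : Hom C W X) :
  zero_arrow f -> zero_arrow (f ∘ h).
Proof.
  intros [Z0 [z1 [z2 [HZ0 ->]]]]. exists Z0, (z1 ∘ h), z2.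
  split; [exact HZ0 | symmetry; apply comp_assoc].
Qed.

Lemma zero_arrow_from_zero_obj {W X : C} (f : Hom C W X) : is_zero_obj C W -> zero_arrow f.
Proof. intros HW. exists W, (idm W), f. split; [exact HW | symmetry; apply comp_id_r]. Qed.

Lemma is_kernel_from_zero_obj {W A B : C} (z : Hom C W A) (f : Hom C A B) :
  is_zero_obj C W -> (forall Y (x : Hom C Y A), zero_arrow (f ∘ x) -> zero_arrow x) ->
  is_kernel z f.
Proof.
  intros HW Htriv. split.
  - apply zero_arrow_postcomp, zero_arrow_from_zero_obj, HW.
  - intros Y x Hx. destruct (proj1 (proj2 HW Y)) as [y _]. exists y. split.
    + apply zero_arrow_unique; [| exact (Htriv Y x Hx)].
      apply zero_arrow_precomp, zero_arrow_from_zero_obj, HW.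
    + intros y' _. apply (proj2 (proj2 HW Y)).
Qed.

Lemma monic_of_left_inverse {X Y : C} (f : Hom C X Y) (r : Hom C Y X) :
  r ∘ f = idm X -> monic f.
Proof.
  intros Hr W u v E.
  rewrite <- (comp_id_l _ _ _ u), <- (comp_id_l _ _ _ v), <- Hr, <- !comp_assoc, E.
  reflexivity.
Qed.

Lemma iso_idm (X : C) : is_iso (idm X).
Proof. exists (idm X). split; apply comp_id_l. Qed.

Lemma pullback_factor {a b c P Q : C} {f : Hom C a c} {g : Hom C b c}
    {p1 : Hom C P a} {p2 : Hom C P b} (q1 : Hom C Q a) (q2 : Hom C Q b) :
  is_pullback f g P p1 p2 -> f ∘ q1 = g ∘ q2 -> exists u, p1 ∘ u = q1 /\ p2 ∘ u = q2.
Proof.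
  intros HP E. destruct (proj2 HP Q q1 q2 E) as [u [E1 [E2 _]]]. exists u. split; assumption.
Qed.

Lemma pullback_jointly_monic {a b c P : C} {f : Hom C a c} {g : Hom C b c}
    {p1 : Hom C P a} {p2 : Hom C P b} :
  is_pullback f g P p1 p2 -> jointly_monic p1 p2.
Proof.
  intros HP Q u v E1 E2.
  assert (E : f ∘ (p1 ∘ v) = g ∘ (p2 ∘ v)) by (rewrite !comp_assoc, (proj1 HP); reflexivity).
  destruct (proj2 HP Q _ _ E) as [w [_ [_ Hw]]].
  rewrite (Hw u E1 E2), (Hw v eq_refl eq_refl). reflexivity.
Qed.

Lemma pullback_monic {a b c P : C} {f : Hom C a c} {g : Hom C b c}
    {p1 : Hom C P a} {p2 : Hom C P b} :
  is_pullback f g P p1 p2 -> monic g -> monic p1.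
Proof.
  intros HP Hg Q u v E. apply (pullback_jointly_monic HP); [exact E |].
  apply Hg. rewrite !comp_assoc, <- (proj1 HP), <- !comp_assoc, E. reflexivity.
Qed.

Lemma kernel_monic {K A B : C} (k : Hom C K A) (f : Hom C A B) : is_kernel k f -> monic k.
Proof.
  intros [Hzero Huniv] X u v E.
  assert (Hz : zero_arrow (f ∘ (k ∘ v))) by (rewrite comp_assoc; apply zero_arrow_precomp, Hzero).
  destruct (Huniv X _ Hz) as [y [_ Hy]]. rewrite (Hy u E), (Hy v eq_refl). reflexivity.
Qed.

Lemma kernel_factor {K A B X : C} {k : Hom C K A} {f : Hom C A B} {x : Hom C X A} :
  is_kernel k f -> zero_arrow (f ∘ x) -> factors_through k x.
Proof. intros [_ Huniv] Hx. destruct (Huniv X x Hx) as [y [Ey _]]. exists y. exact Ey. Qed.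

Lemma normal_monic_monic {K A : C} (k : Hom C K A) : normal_monic k -> monic k.
Proof. intros [B [f Hk]]. exact (kernel_monic k f Hk). Qed.

Lemma is_kernel_comp_monic {K N A B : C} (i : Hom C K N) (n : Hom C N A) (p : Hom C A B) :
  is_kernel (n ∘ i) p -> monic n -> is_kernel i (p ∘ n).
Proof.
  intros [Hzero Huniv] Hn. split.
  - rewrite <- comp_assoc. exact Hzero.
  - intros X x Hx. rewrite <- comp_assoc in Hx.
    destruct (Huniv X _ Hx) as [y [Ey Hy]]. exists y. split.
    + apply Hn. rewrite comp_assoc. exact Ey.
    + intros y' Ey'. apply Hy. rewrite <- comp_assoc, Ey'. reflexivity.
Qed.

Lemma regular_epi_epi {X Y : C} (c : Hom C X Y) :
  regular_epi c -> forall W (u v : Hom C Y W), u ∘ c = v ∘ c -> u = v.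
Proof.
  intros [X0 [a [b [Hab Huniv]]]] W u v E.
  assert (Hu : u ∘ c ∘ a = u ∘ c ∘ b) by (rewrite <- !comp_assoc, Hab; reflexivity).
  destruct (Huniv W (u ∘ c) Hu) as [w [_ Hw]].
  rewrite (Hw u eq_refl), (Hw v (eq_sym E)). reflexivity.
Qed.

Lemma regular_epi_idm (X : C) : regular_epi (idm X).
Proof.
  exists X, (idm X), (idm X). split; [reflexivity |].
  intros Y h _. exists h. split; [apply comp_id_r |].
  intros v Ev. rewrite comp_id_r in Ev. exact Ev.
Qed.

Lemma regular_epi_descent {X X' T Q1 Q2 : C} (c : Hom C X X') (t1 : Hom C T Q1)
    (t2 : Hom C T Q2) (F1 : Hom C X' Q1) (F2 : Hom C X' Q2) :
  regular_epi c -> jointly_monic t1 t2 ->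
  (exists y, t1 ∘ y = F1 ∘ c /\ t2 ∘ y = F2 ∘ c) ->
  exists y', t1 ∘ y' = F1 /\ t2 ∘ y' = F2.
Proof.
  intros Hc Ht [y [E1 E2]].
  pose proof (regular_epi_epi c Hc) as Hepi.
  destruct Hc as [X0 [a [b [Hab Huniv]]]].
  assert (Hy : y ∘ a = y ∘ b).
  { apply Ht; rewrite !comp_assoc; [rewrite E1 | rewrite E2];
      rewrite <- !comp_assoc, Hab; reflexivity. }
  destruct (Huniv T y Hy) as [y' [Ey' _]].
  exists y'. split; apply Hepi; rewrite <- comp_assoc, Ey'; assumption.
Qed.

Lemma regular_epi_descent_monic {X X' N P : C} (c : Hom C X X') (n : Hom C N P)
    (F : Hom C X' P) (y : Hom C X N) :
  regular_epi c -> monic n -> n ∘ y = F ∘ c -> factors_through n F.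
Proof.
  intros Hc Hn E.
  destruct (regular_epi_descent c n n F F Hc (fun _ u v E1 _ => Hn _ u v E1))
    as [y' [Ey' _]]; [exists y; split; exact E |].
  exists y'. exact Ey'.
Qed.

Lemma locally_factors_of_factors {X D P : C} (f : Hom C D P) (x : Hom C X P) :
  factors_through f x -> locally_factors f x.
Proof.
  intros [y Ey]. exists X, (idm X), y.
  split; [apply regular_epi_idm | rewrite comp_id_r; exact Ey].
Qed.

Variable Z : C.
Hypothesis HZ : is_zero_obj C Z.

Lemma to_zero_inhabited (X : C) : inhabited (Hom C X Z).
Proof. destruct (proj1 (proj2 HZ X)) as [t _]. exact (inhabits t). Qed.

Lemma from_zero_inhabited (X : C) : inhabited (Hom C Z X).
Proof. destruct (proj1 (proj1 HZ X)) as [t _]. exact (inhabits t). Qed.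

Lemma to_zero_unique {X : C} (f g : Hom C X Z) : f = g.
Proof. exact (proj2 (proj2 HZ X) f g). Qed.

Lemma from_zero_unique {X : C} (f g : Hom C Z X) : f = g.
Proof. exact (proj2 (proj1 HZ X) f g). Qed.

Lemma zero_arrow_exists (X Y : C) : exists f : Hom C X Y, zero_arrow f.
Proof.
  destruct (to_zero_inhabited X) as [t]. destruct (from_zero_inhabited Y) as [z].
  exists (z ∘ t), Z, t, z. split; [exact HZ | reflexivity].
Qed.

Lemma zero_arrow_of_monic_comp {X Y W : C} (f : Hom C Y W) (x : Hom C X Y) :
  monic f -> zero_arrow (f ∘ x) -> zero_arrow x.
Proof.
  intros Hf Hx. destruct (zero_arrow_exists X Y) as [z Hz].
  replace x with z; [exact Hz |].
  apply Hf, zero_arrow_unique; [apply zero_arrow_postcomp, Hz | exact Hx].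
Qed.

Lemma zero_obj_of_subterminal (P : C) : (forall Y (u v : Hom C Y P), u = v) -> is_zero_obj C P.
Proof.
  intros Hsub. destruct (to_zero_inhabited P) as [tP]. destruct (from_zero_inhabited P) as [zP].
  split; intros Y.
  - destruct (from_zero_inhabited Y) as [zY]. split; [exists (zY ∘ tP); trivial |].
    intros f g.
    rewrite <- (comp_id_r _ _ _ f), <- (comp_id_r _ _ _ g), (Hsub _ (idm P) (zP ∘ tP)),
      !comp_assoc.
    f_equal. apply from_zero_unique.
  - destruct (to_zero_inhabited Y) as [tY]. split; [exists (zP ∘ tY); trivial | apply Hsub].
Qed.

Hypothesis Hpb : has_pullbacks C.

Lemma kernel_exists {A B : C} (f : Hom C A B) : exists K (k : Hom C K A), is_kernel k f.
Proof.
  destruct (from_zero_inhabited B) as [z].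
  destruct (Hpb _ _ _ f z) as [P [p1 [p2 HP]]].
  exists P, p1. split.
  - rewrite (proj1 HP). apply zero_arrow_precomp, zero_arrow_from_zero_obj, HZ.
  - intros X x Hx. destruct (to_zero_inhabited X) as [t].
    assert (E : f ∘ x = z ∘ t).
    { apply zero_arrow_unique; [exact Hx |].
      apply zero_arrow_precomp, zero_arrow_from_zero_obj, HZ. }
    destruct (proj2 HP X x t E) as [u [Eu1 [_ Hu]]].
    exists u. split; [exact Eu1 |]. intros y Ey. apply Hu; [exact Ey | apply to_zero_unique].
Qed.

Lemma product_exists (U V : C) : exists P (p1 : Hom C P U) (p2 : Hom C P V),
  (forall Y (a : Hom C Y U) (b : Hom C Y V), exists h, p1 ∘ h = a /\ p2 ∘ h = b) /\
  jointly_monic p1 p2.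
Proof.
  destruct (to_zero_inhabited U) as [tU]. destruct (to_zero_inhabited V) as [tV].
  destruct (Hpb _ _ _ tU tV) as [P [p1 [p2 HP]]].
  exists P, p1, p2. split.
  - intros Y a b. apply (pullback_factor a b HP), to_zero_unique.
  - exact (pullback_jointly_monic HP).
Qed.

Lemma pair_pullback_exists {X Y B1 B2 : C} (f1 : Hom C X B1) (g1 : Hom C X B2)
    (f2 : Hom C Y B1) (g2 : Hom C Y B2) :
  exists P (p : Hom C P X) (p' : Hom C P Y),
    f1 ∘ p = f2 ∘ p' /\ g1 ∘ p = g2 ∘ p' /\
    forall W (u : Hom C W X) (v : Hom C W Y), f1 ∘ u = f2 ∘ v -> g1 ∘ u = g2 ∘ v ->
      exists h, p ∘ h = u /\ p' ∘ h = v.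
Proof.
  destruct (product_exists B1 B2) as [BB [b1 [b2 [Hpair Hjm]]]].
  destruct (Hpair X f1 g1) as [h1 [Eh11 Eh12]].
  destruct (Hpair Y f2 g2) as [h2 [Eh21 Eh22]].
  destruct (Hpb _ _ _ h1 h2) as [P [p [p' HP]]].
  assert (Eh : forall W (u : Hom C W X) (v : Hom C W Y),
             h1 ∘ u = h2 ∘ v <-> f1 ∘ u = f2 ∘ v /\ g1 ∘ u = g2 ∘ v).
  { intros W u v. rewrite <- Eh11, <- Eh12, <- Eh21, <- Eh22, <- !comp_assoc. split.
    - intros E. rewrite E. split; reflexivity.
    - intros [E1 E2]. apply Hjm; assumption. }
  destruct (proj1 (Eh _ p p') (proj1 HP)) as [E1 E2].
  exists P, p, p'. split; [exact E1 | split; [exact E2 |]].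
  intros W u v Eu Ev. apply (pullback_factor u v HP), Eh. split; assumption.
Qed.

Lemma composable_pairs_exists {A B1 B2 : C} (psi : Hom C A B1) (phi : Hom C A B2) :
  exists D (d1 d2 d3 : Hom C D A),
    psi ∘ d1 = psi ∘ d2 /\ phi ∘ d2 = phi ∘ d3 /\
    forall Y (x y z : Hom C Y A), psi ∘ x = psi ∘ y -> phi ∘ y = phi ∘ z ->
      exists d, d1 ∘ d = x /\ d2 ∘ d = y /\ d3 ∘ d = z.
Proof.
  destruct (Hpb _ _ _ psi psi) as [S [s1 [s2 HS]]].
  destruct (Hpb _ _ _ phi phi) as [R [r1 [r2 HR]]].
  destruct (Hpb _ _ _ s2 r1) as [D [dS [dR HD]]].
  exists D, (s1 ∘ dS), (s2 ∘ dS), (r2 ∘ dR). split; [| split].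
  - rewrite !comp_assoc, (proj1 HS). reflexivity.
  - rewrite (proj1 HD), !comp_assoc, (proj1 HR). reflexivity.
  - intros Y x y z Exy Eyz.
    destruct (pullback_factor x y HS Exy) as [u [Eu1 Eu2]].
    destruct (pullback_factor y z HR Eyz) as [v [Ev1 Ev2]].
    assert (E : s2 ∘ u = r1 ∘ v) by (rewrite Eu2, Ev1; reflexivity).
    destruct (pullback_factor u v HD E) as [d [Ed1 Ed2]].
    exists d. rewrite <- !comp_assoc, Ed1, Ed2. split; [| split]; assumption.
Qed.

Hypothesis Hproto : protomodular C.

Lemma iso_of_contains_kernel_section {X B K N : C} (p : Hom C X B) (s : Hom C B X)
    (i : Hom C K X) (n : Hom C N X) :
  is_kernel i p -> p ∘ s = idm B -> monic n ->
  factors_through n i -> factors_through n s -> is_iso n.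
Proof.
  intros Hi Hs Hn [i' Ei] [s' Es]. subst i s.
  apply (Hproto _ _ _ _ _ _ i' (p ∘ n) s' (n ∘ i') p (n ∘ s') (idm K) n (idm B)).
  - exact (is_kernel_comp_monic i' n p Hi Hn).
  - rewrite <- comp_assoc. exact Hs.
  - exact Hi.
  - exact Hs.
  - rewrite comp_id_r. reflexivity.
  - rewrite comp_id_l. reflexivity.
  - rewrite comp_id_r. reflexivity.
  - apply iso_idm.
  - apply iso_idm.
Qed.

Lemma factors_through_split_epi {X B K N P : C} (p : Hom C X B) (s : Hom C B X)
    (i : Hom C K X) (n : Hom C N P) (x : Hom C X P) :
  is_kernel i p -> p ∘ s = idm B -> monic n ->
  factors_through n (x ∘ i) -> factors_through n (x ∘ s) -> factors_through n x.
Proof.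
  intros Hi Hs Hn [i' Ei] [s' Es].
  destruct (Hpb _ _ _ x n) as [M [mu1 [mu2 HM]]].
  destruct (pullback_factor i i' HM (eq_sym Ei)) as [u [Eu _]].
  destruct (pullback_factor s s' HM (eq_sym Es)) as [v [Ev _]].
  assert (Hiso : is_iso mu1).
  { apply (iso_of_contains_kernel_section p s i mu1 Hi Hs (pullback_monic HM Hn));
      [exists u | exists v]; assumption. }
  destruct Hiso as [g [_ Hg]]. exists (mu2 ∘ g).
  rewrite comp_assoc, <- (proj1 HM), <- comp_assoc, Hg, comp_id_r. reflexivity.
Qed.

Lemma monic_of_trivial_kernel {A X : C} (h : Hom C A X) :
  (forall Y (x : Hom C Y A), zero_arrow (h ∘ x) -> zero_arrow x) -> monic h.
Proof.
  intros Htriv.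
  destruct (Hpb _ _ _ h h) as [R [p1 [p2 HR]]].
  destruct (pullback_factor (idm A) (idm A) HR eq_refl) as [d [Ed1 Ed2]].
  destruct (from_zero_inhabited R) as [zR].
  assert (Hker : is_kernel zR p1).
  { apply is_kernel_from_zero_obj; [exact HZ |].
    intros Y x Hx. destruct (zero_arrow_exists Y R) as [z Hz].
    replace x with z; [exact Hz |].
    apply (pullback_jointly_monic HR); apply zero_arrow_unique;
      try (apply zero_arrow_postcomp, Hz); [exact Hx |].
    apply Htriv. rewrite comp_assoc, <- (proj1 HR), <- comp_assoc.
    apply zero_arrow_postcomp, Hx. }
  assert (Hd : is_iso d).
  { apply (iso_of_contains_kernel_section p1 d zR d Hker Ed1 (monic_of_left_inverse d p1 Ed1)).
    - destruct (from_zero_inhabited A) as [zA]. exists zA. apply from_zero_unique.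
    - exists (idm A). apply comp_id_r. }
  destruct Hd as [g [_ Hg]].
  assert (Ep : p1 = p2).
  { rewrite <- (comp_id_r _ _ _ p1), <- (comp_id_r _ _ _ p2), <- Hg, !comp_assoc, Ed1, Ed2.
    reflexivity. }
  intros Y u v E. destruct (pullback_factor u v HR E) as [w [Ew1 Ew2]].
  rewrite <- Ew1, <- Ew2, Ep. reflexivity.
Qed.

Hypothesis Hcoeq : forall (a b : C) (f : Hom C a b) (P : C) (p1 p2 : Hom C P a),
  is_pullback f f P p1 p2 -> exists (Q : C) (q : Hom C a Q), is_coequalizer p1 p2 q.
Hypothesis Hstab : forall (a b c : C) (q : Hom C a c) (g : Hom C b c)
  (P : C) (p1 : Hom C P a) (p2 : Hom C P b),
  regular_epi q -> is_pullback q g P p1 p2 -> regular_epi p2.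

Lemma regular_epi_locally_factors {X T Y : C} (e : Hom C X T) (v : Hom C Y T) :
  regular_epi e -> locally_factors e v.
Proof.
  intros He. destruct (Hpb _ _ _ e v) as [P [p1 [p2 HP]]].
  exists P, p2, p1. split; [exact (Hstab _ _ _ _ _ _ _ _ He HP) | exact (proj1 HP)].
Qed.

Lemma locally_factors_precomp {X X' D P : C} (f : Hom C D P) (x : Hom C X P) (g : Hom C X' X) :
  locally_factors f x -> locally_factors f (x ∘ g).
Proof.
  intros [Y [c [y [Hc E]]]].
  destruct (regular_epi_locally_factors c g Hc) as [Y' [c' [a [Hc' Ea]]]].
  exists Y', c', (y ∘ a). split; [exact Hc' |].
  rewrite comp_assoc, E, <- comp_assoc, Ea, comp_assoc. reflexivity.
Qed.

Lemma image_factorization {X Y : C} (g : Hom C X Y) :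
  exists M (e : Hom C X M) (n : Hom C M Y), regular_epi e /\ monic n /\ n ∘ e = g.
Proof.
  destruct (Hpb _ _ _ g g) as [P [p1 [p2 HP]]].
  destruct (Hcoeq _ _ g P p1 p2 HP) as [M [e He]].
  assert (Hre : regular_epi e) by (exists P, p1, p2; exact He).
  destruct He as [Hep Huniv].
  destruct (Huniv Y g (proj1 HP)) as [n [En _]].
  exists M, e, n. split; [exact Hre | split; [| exact En]].
  intros Y0 u v Euv.
  destruct (regular_epi_locally_factors e u Hre) as [Y1 [c1 [a [Hc1 Ea]]]].
  destruct (regular_epi_locally_factors e (v ∘ c1) Hre) as [Y2 [c2 [b [Hc2 Eb]]]].
  assert (Eg : g ∘ (a ∘ c2) = g ∘ b).
  { rewrite <- En. comp_normalize. rewrite_comp Ea. rewrite_comp Eb. rewrite Euv. reflexivity. }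
  destruct (pullback_factor _ _ HP Eg) as [w [Ew1 Ew2]].
  assert (Ee : e ∘ (a ∘ c2) = e ∘ b) by (rewrite <- Ew1, <- Ew2, !comp_assoc, Hep; reflexivity).
  rewrite comp_assoc, Ea, Eb in Ee.
  apply (regular_epi_epi c1 Hc1), (regular_epi_epi c2 Hc2). exact Ee.
Qed.

Lemma jointly_monic_image {X Q1 Q2 : C} (f1 : Hom C X Q1) (f2 : Hom C X Q2) :
  exists T (e : Hom C X T) (t1 : Hom C T Q1) (t2 : Hom C T Q2),
    regular_epi e /\ jointly_monic t1 t2 /\ t1 ∘ e = f1 /\ t2 ∘ e = f2.
Proof.
  destruct (product_exists Q1 Q2) as [P [p1 [p2 [Hpair Hjm]]]].
  destruct (Hpair X f1 f2) as [g [Eg1 Eg2]].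
  destruct (image_factorization g) as [T [e [n [He [Hn En]]]]].
  exists T, e, (p1 ∘ n), (p2 ∘ n). split; [exact He | split; [| split]].
  - intros Y u v E1 E2. apply Hn, Hjm; rewrite !comp_assoc; assumption.
  - rewrite <- comp_assoc, En. exact Eg1.
  - rewrite <- comp_assoc, En. exact Eg2.
Qed.

Lemma locally_factors_iff_image {X D M P : C} (f : Hom C D P) (e : Hom C D M) (n : Hom C M P)
    (x : Hom C X P) :
  regular_epi e -> monic n -> n ∘ e = f -> (locally_factors f x <-> factors_through n x).
Proof.
  intros He Hn Ef. subst f. split.
  - intros [Y [c [y [Hc E]]]]. apply (regular_epi_descent_monic c n x (e ∘ y) Hc Hn).
    rewrite comp_assoc. exact E.
  - intros [y Ey]. destruct (regular_epi_locally_factors e y He) as [Y [c [a [Hc Ea]]]].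
    exists Y, c, a. split; [exact Hc |]. rewrite <- comp_assoc, Ea, comp_assoc, Ey. reflexivity.
Qed.

Lemma locally_factors_split_epi {X B K D P : C} (p : Hom C X B) (s : Hom C B X)
    (i : Hom C K X) (f : Hom C D P) (x : Hom C X P) :
  is_kernel i p -> p ∘ s = idm B ->
  locally_factors f (x ∘ i) -> locally_factors f (x ∘ s) -> locally_factors f x.
Proof.
  intros Hi Hs Hxi Hxs.
  destruct (image_factorization f) as [M [e [n [He [Hn Ef]]]]].
  apply (locally_factors_iff_image f e n x He Hn Ef).
  apply (factors_through_split_epi p s i n x Hi Hs Hn);
    apply (locally_factors_iff_image f e n _ He Hn Ef); assumption.
Qed.

Section KernelPairsCommute.

Variables (A B1 B2 K : C) (psi : Hom C A B1) (phi : Hom C A B2) (k : Hom C K A).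
Hypothesis Hk : is_kernel k phi.
Variables (D : C) (d1 d2 d3 : Hom C D A).
Hypothesis HD12 : psi ∘ d1 = psi ∘ d2.
Hypothesis HD23 : phi ∘ d2 = phi ∘ d3.
Hypothesis HD : forall Y (x y z : Hom C Y A), psi ∘ x = psi ∘ y -> phi ∘ y = phi ∘ z ->
  exists d, d1 ∘ d = x /\ d2 ∘ d = y /\ d3 ∘ d = z.
Variables (E : C) (pd : Hom C E D) (w : Hom C E A).
Hypothesis HE : forall W (d : Hom C W D) (v : Hom C W A),
  phi ∘ d1 ∘ d = phi ∘ v -> psi ∘ d3 ∘ d = psi ∘ v -> exists h, pd ∘ h = d /\ w ∘ h = v.

Lemma composable_triple_locally_factors {W : C} (d : Hom C W D) (v : Hom C W A) :
  phi ∘ d1 ∘ d = phi ∘ v -> psi ∘ d3 ∘ d = psi ∘ v -> locally_factors pd d.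
Proof.
  intros E1 E2. apply locally_factors_of_factors.
  destruct (HE W d v E1 E2) as [h [Eh _]]. exists h. exact Eh.
Qed.

(* On the kernel of [d2], the triples [(x, 0, z)], the map [(x, 0, z) ↦ z ∈ K] is split by
   [k ↦ (0, 0, k)], and its kernel consists of the triples [(x, 0, 0)]. *)
Lemma kernel_middle_locally_factors {N : C} (eps : Hom C N D) :
  is_kernel eps d2 -> locally_factors pd eps.
Proof.
  intros Heps.
  assert (Hrho : zero_arrow (phi ∘ (d3 ∘ eps))).
  { rewrite comp_assoc, <- HD23, <- comp_assoc. apply zero_arrow_postcomp, (proj1 Heps). }
  destruct (kernel_factor Hk Hrho) as [rho Erho].
  destruct (zero_arrow_exists K A) as [z Hz].
  assert (Ezk : phi ∘ z = phi ∘ k).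
  { apply zero_arrow_unique; [apply zero_arrow_postcomp, Hz | exact (proj1 Hk)]. }
  destruct (HD K z z k eq_refl Ezk) as [dk [Edk1 [Edk2 Edk3]]].
  assert (Hdk : zero_arrow (d2 ∘ dk)) by (rewrite Edk2; exact Hz).
  destruct (kernel_factor Heps Hdk) as [ks Eks].
  assert (Hsplit : rho ∘ ks = idm K).
  { apply (kernel_monic k phi Hk).
    rewrite comp_id_r, comp_assoc, Erho, <- comp_assoc, Eks. exact Edk3. }
  destruct (kernel_exists rho) as [N0 [io Hio]].
  apply (locally_factors_split_epi rho ks io pd eps Hio Hsplit).
  - apply (composable_triple_locally_factors _ (d1 ∘ eps ∘ io)).
    + comp_normalize. reflexivity.
    + apply zero_arrow_unique.
      * comp_normalize. rewrite_comp (eq_sym Erho). rewrite <- comp_assoc.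
        apply zero_arrow_postcomp, (proj1 Hio).
      * comp_normalize. rewrite HD12. apply zero_arrow_precomp.
        rewrite <- comp_assoc. apply zero_arrow_postcomp, (proj1 Heps).
  - rewrite Eks. apply (composable_triple_locally_factors dk k).
    + rewrite <- comp_assoc, Edk1. exact Ezk.
    + rewrite <- comp_assoc, Edk3. reflexivity.
Qed.

Lemma composable_triples_locally_factor : locally_factors pd (idm D).
Proof.
  destruct (HD A (idm A) (idm A) (idm A) eq_refl eq_refl) as [diag [Ed1 [Ed2 Ed3]]].
  destruct (kernel_exists d2) as [N [eps Heps]].
  apply (locally_factors_split_epi d2 diag eps pd (idm D) Heps Ed2); rewrite comp_id_l.
  - exact (kernel_middle_locally_factors eps Heps).
  - apply (composable_triple_locally_factors diag (idm A)); rewrite <- comp_assoc;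
      [rewrite Ed1 | rewrite Ed3]; reflexivity.
Qed.

End KernelPairsCommute.

Lemma kernel_pairs_commute {A B1 B2 K Y : C} (psi : Hom C A B1) (phi : Hom C A B2)
    (k : Hom C K A) (x y y' : Hom C Y A) :
  is_kernel k phi -> psi ∘ x = psi ∘ y -> phi ∘ y = phi ∘ y' ->
  exists Y' (c : Hom C Y' Y) (w : Hom C Y' A),
    regular_epi c /\ phi ∘ (x ∘ c) = phi ∘ w /\ psi ∘ w = psi ∘ (y' ∘ c).
Proof.
  intros Hk Exy Eyy'.
  destruct (composable_pairs_exists psi phi) as [D [d1 [d2 [d3 [HD12 [HD23 HD]]]]]].
  destruct (pair_pullback_exists (phi ∘ d1) (psi ∘ d3) phi psi)
    as [E [pd [w [Ew1 [Ew2 HE]]]]].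
  destruct (HD Y x y y' Exy Eyy') as [d [Ed1 [_ Ed3]]].
  destruct (locally_factors_precomp pd (idm D) d
              (composable_triples_locally_factor _ _ _ _ psi phi k Hk _ d1 d2 d3
                 HD12 HD23 HD _ pd w HE))
    as [Y' [c [h [Hc Eh]]]].
  rewrite comp_id_l in Eh.
  exists Y', c, (w ∘ h). split; [exact Hc |]. comp_normalize. split.
  - rewrite <- Ew1. rewrite_comp Eh. rewrite_comp Ed1. reflexivity.
  - rewrite <- Ew2. rewrite_comp Eh. rewrite_comp Ed3. reflexivity.
Qed.

Section NormalImage.

Variables (A B K : C) (phi : Hom C A B) (k : Hom C K A).
Hypothesis Hk : is_kernel k phi.
Variables (R Q : C) (r1 r2 : Hom C R A) (q : Hom C A Q).
Hypothesis HR : is_pullback phi phi R r1 r2.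
Hypothesis Hq : is_coequalizer r1 r2 q.

Lemma quotient_regular_epi : regular_epi q.
Proof. exists R, r1, r2. exact Hq. Qed.

Lemma quotient_eq_iff {Y : C} (a b : Hom C Y A) : q ∘ a = q ∘ b <-> phi ∘ a = phi ∘ b.
Proof.
  destruct Hq as [Hqr Huniv].
  destruct (Huniv B phi (proj1 HR)) as [phi' [Ephi _]].
  split.
  - intros E. rewrite <- Ephi, <- !comp_assoc, E. reflexivity.
  - intros E. destruct (pullback_factor a b HR E) as [u [Eu1 Eu2]].
    rewrite <- Eu1, <- Eu2, !comp_assoc, Hqr. reflexivity.
Qed.

Lemma quotient_kernel {Y : C} (u : Hom C Y A) : zero_arrow (q ∘ u) -> factors_through k u.
Proof.
  intros Hu. apply (kernel_factor Hk).
  destruct (zero_arrow_exists Y A) as [z Hz].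
  rewrite (proj1 (quotient_eq_iff u z)).
  - apply zero_arrow_postcomp, Hz.
  - apply zero_arrow_unique; [exact Hu | apply zero_arrow_postcomp, Hz].
Qed.

Lemma quotient_kernel_zero : zero_arrow (q ∘ k).
Proof.
  destruct (zero_arrow_exists K A) as [z Hz].
  rewrite (proj2 (quotient_eq_iff k z)).
  - apply zero_arrow_postcomp, Hz.
  - apply zero_arrow_unique; [exact (proj1 Hk) | apply zero_arrow_postcomp, Hz].
Qed.

Variables (I B' : C) (psi : Hom C A B') (m : Hom C I A).
Hypothesis Hm : is_kernel m psi.

Lemma quotient_monic_of_perp : perp k m -> monic (q ∘ m).
Proof.
  intros Hperp. apply monic_of_trivial_kernel. intros Y x Hx.
  rewrite <- comp_assoc in Hx.
  destruct (quotient_kernel _ Hx) as [y Ey].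
  destruct (Hpb _ _ _ k m) as [P [p1 [p2 HP]]].
  destruct (pullback_factor y x HP Ey) as [u [_ Eu]].
  rewrite <- Eu. apply zero_arrow_precomp, zero_arrow_from_zero_obj, (Hperp P p1 p2 HP).
Qed.

Hypothesis Hqm : monic (q ∘ m).
Variables (S : C) (s1 s2 : Hom C S A).
Hypothesis HS : is_pullback psi psi S s1 s2.

(* The pairs [(a, b)] with [ψ a = ψ b] and [a ∈ K] project onto [K], split by the diagonal;
   the kernel of this projection consists of the pairs [(0, b)] with [b ∈ I]. *)
Lemma quotient_kernel_pair_image {Y : C} (sg : Hom C Y S) (a : Hom C Y K) :
  k ∘ a = s1 ∘ sg -> factors_through (q ∘ m) (q ∘ s2 ∘ sg).
Proof.
  intros Ea.
  destruct (Hpb _ _ _ k s1) as [L [l1 [l2 HL]]].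
  destruct (pullback_factor (idm A) (idm A) HS eq_refl) as [diag [Ediag1 Ediag2]].
  assert (Esec : k ∘ idm K = s1 ∘ (diag ∘ k)).
  { rewrite comp_assoc, Ediag1, comp_id_l, comp_id_r. reflexivity. }
  destruct (pullback_factor _ _ HL Esec) as [sec [Esec1 Esec2]].
  destruct (kernel_exists l1) as [L0 [io Hio]].
  assert (Hl2 : factors_through (q ∘ m) (q ∘ s2 ∘ l2)).
  { apply (factors_through_split_epi l1 sec io (q ∘ m) (q ∘ s2 ∘ l2) Hio Esec1 Hqm).
    - assert (Hz : zero_arrow (psi ∘ (s2 ∘ l2 ∘ io))).
      { comp_normalize. rewrite <- (proj1 HS). rewrite_comp (eq_sym (proj1 HL)).
        rewrite <- comp_assoc. apply zero_arrow_postcomp, (proj1 Hio). }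
      destruct (kernel_factor Hm Hz) as [i Ei].
      exists i. rewrite <- comp_assoc, Ei. comp_normalize. reflexivity.
    - destruct (zero_arrow_exists K I) as [z Hz]. exists z.
      apply zero_arrow_unique; [apply zero_arrow_postcomp, Hz |].
      rewrite <- comp_assoc, Esec2. comp_normalize. rewrite_comp Ediag2. rewrite comp_id_r.
      exact quotient_kernel_zero. }
  destruct Hl2 as [j Ej]. destruct (pullback_factor _ _ HL Ea) as [l [_ El]].
  exists (j ∘ l). rewrite comp_assoc, Ej, <- El. comp_normalize. reflexivity.
Qed.

Variables (T : C) (e : Hom C S T) (t1 t2 : Hom C T Q).
Hypothesis He : regular_epi e.
Hypothesis Ht : jointly_monic t1 t2.
Hypothesis Ht1 : t1 ∘ e = q ∘ s1.
Hypothesis Ht2 : t2 ∘ e = q ∘ s2.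

Lemma image_relation_reflexive : exists d, t1 ∘ d = idm Q /\ t2 ∘ d = idm Q.
Proof.
  destruct (pullback_factor (idm A) (idm A) HS eq_refl) as [diag [E1 E2]].
  apply (regular_epi_descent q t1 t2 (idm Q) (idm Q) quotient_regular_epi Ht).
  exists (e ∘ diag). rewrite !comp_assoc, Ht1, Ht2, <- !comp_assoc, E1, E2.
  rewrite comp_id_l, comp_id_r. split; reflexivity.
Qed.

Lemma image_relation_symmetric : exists s, t1 ∘ s = t2 /\ t2 ∘ s = t1.
Proof.
  destruct (pullback_factor s2 s1 HS (eq_sym (proj1 HS))) as [sw [Esw1 Esw2]].
  apply (regular_epi_descent e t1 t2 t2 t1 He Ht).
  exists (e ∘ sw). rewrite !comp_assoc, Ht1, Ht2, <- !comp_assoc, Esw1, Esw2.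
  split; reflexivity.
Qed.

Lemma image_relation_transitive (P : C) (p1 p2 : Hom C P T) :
  is_pullback t2 t1 P p1 p2 -> exists t, t1 ∘ t = t1 ∘ p1 /\ t2 ∘ t = t2 ∘ p2.
Proof.
  intros HP.
  destruct (regular_epi_locally_factors e p1 He) as [U1 [c1 [a [Hc1 Ea]]]].
  destruct (regular_epi_locally_factors e (p2 ∘ c1) He) as [U2 [c2 [b [Hc2 Eb]]]].
  assert (Ephi : phi ∘ (s2 ∘ a ∘ c2) = phi ∘ (s1 ∘ b)).
  { apply quotient_eq_iff. comp_normalize. rewrite <- Ht1, <- Ht2.
    rewrite_comp Ea. rewrite_comp Eb. rewrite (proj1 HP). reflexivity. }
  assert (Epsi : psi ∘ (s1 ∘ a ∘ c2) = psi ∘ (s2 ∘ a ∘ c2)).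
  { rewrite !comp_assoc, (proj1 HS). reflexivity. }
  destruct (kernel_pairs_commute psi phi k _ _ _ Hk Epsi Ephi) as [U3 [c3 [v [Hc3 [Ev1 Ev2]]]]].
  assert (Ev2' : psi ∘ v = psi ∘ (s2 ∘ b ∘ c3)).
  { rewrite Ev2, !comp_assoc, (proj1 HS). reflexivity. }
  destruct (pullback_factor _ _ HS Ev2') as [sg [Esg1 Esg2]].
  apply (regular_epi_descent c1 t1 t2 _ _ Hc1 Ht), (regular_epi_descent c2 t1 t2 _ _ Hc2 Ht),
    (regular_epi_descent c3 t1 t2 _ _ Hc3 Ht).
  exists (e ∘ sg). split.
  - rewrite comp_assoc, Ht1, <- comp_assoc, Esg1.
    rewrite (proj2 (quotient_eq_iff v (s1 ∘ a ∘ c2 ∘ c3)) (eq_sym Ev1)).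
    comp_normalize. rewrite <- Ht1. rewrite_comp Ea. reflexivity.
  - rewrite comp_assoc, Ht2, <- comp_assoc, Esg2.
    comp_normalize. rewrite <- Ht2. rewrite_comp Eb. reflexivity.
Qed.

Lemma image_relation_equivalence : equivalence_relation t1 t2.
Proof.
  split; [exact Ht | split; [exact image_relation_reflexive | split]].
  - exact image_relation_symmetric.
  - exact image_relation_transitive.
Qed.

Lemma quotient_normal_of_effective {W : C} (t : Hom C Q W) :
  is_pullback t t T t1 t2 -> is_kernel (q ∘ m) t.
Proof.
  intros HT. split.
  - destruct (zero_arrow_exists I A) as [z Hz].
    assert (E : psi ∘ z = psi ∘ m).
    { apply zero_arrow_unique; [apply zero_arrow_postcomp, Hz | exact (proj1 Hm)]. }
    destruct (pullback_factor _ _ HS E) as [sg [Esg1 Esg2]].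
    rewrite <- Esg2. comp_normalize. rewrite_comp (eq_sym Ht2). rewrite <- (proj1 HT).
    rewrite_comp Ht1. rewrite_comp Esg1. apply zero_arrow_postcomp, Hz.
  - intros X x Hx.
    destruct (zero_arrow_exists X Q) as [z Hz].
    assert (E : t ∘ z = t ∘ x).
    { apply zero_arrow_unique; [apply zero_arrow_postcomp, Hz | exact Hx]. }
    destruct (pullback_factor _ _ HT E) as [v [Ev1 Ev2]].
    destruct (regular_epi_locally_factors e v He) as [X1 [c [sg [Hc Esg]]]].
    assert (Hz1 : zero_arrow (q ∘ (s1 ∘ sg))).
    { rewrite comp_assoc, <- Ht1, <- comp_assoc, Esg, comp_assoc, Ev1.
      apply zero_arrow_precomp, Hz. }
    destruct (quotient_kernel _ Hz1) as [a Ea].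
    destruct (quotient_kernel_pair_image sg a Ea) as [j Ej].
    assert (Ex : q ∘ m ∘ j = x ∘ c).
    { rewrite Ej, <- Ht2, <- comp_assoc, Esg, comp_assoc, Ev2. reflexivity. }
    destruct (regular_epi_descent_monic c (q ∘ m) x j Hc Hqm Ex) as [y Ey].
    exists y. split; [exact Ey |]. intros y' Ey'. apply Hqm. rewrite Ey, Ey'. reflexivity.
Qed.

End NormalImage.

Hypothesis Heff : forall (X R : C) (r1 r2 : Hom C R X),
  equivalence_relation r1 r2 -> effective r1 r2.

Lemma normal_quotient_of_perp {K I A B B' : C} (k : Hom C K A) (phi : Hom C A B)
    (m : Hom C I A) (psi : Hom C A B') :
  is_kernel k phi -> is_kernel m psi -> perp k m ->
  exists Q (q : Hom C A Q), zero_arrow (q ∘ k) /\ normal_monic (q ∘ m).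
Proof.
  intros Hk Hm Hperp.
  destruct (Hpb _ _ _ phi phi) as [R [r1 [r2 HR]]].
  destruct (Hcoeq _ _ phi R r1 r2 HR) as [Q [q Hq]].
  pose proof (quotient_monic_of_perp A B K phi k Hk R Q r1 r2 q HR Hq I m Hperp) as Hqm.
  destruct (Hpb _ _ _ psi psi) as [S [s1 [s2 HS]]].
  destruct (jointly_monic_image (q ∘ s1) (q ∘ s2)) as [T [e [t1 [t2 [He [Ht [Ht1 Ht2]]]]]]].
  destruct (Heff _ _ t1 t2 (image_relation_equivalence A B K phi k Hk R Q r1 r2 q HR Hq
                             B' psi S s1 s2 HS T e t1 t2 He Ht Ht1 Ht2)) as [W [t HT]].
  exists Q, q. split; [exact (quotient_kernel_zero A B K phi k Hk R Q r1 r2 q HR Hq) |].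
  exists W, t.
  exact (quotient_normal_of_effective A B K phi k Hk R Q r1 r2 q HR Hq I B' psi m Hm Hqm
           S s1 s2 HS T e t1 t2 He Ht1 Ht2 t HT).
Qed.

Lemma perp_kernel_of_monic_comp {K I A X : C} (k : Hom C K A) (h : Hom C A X) (m : Hom C I A) :
  is_kernel k h -> monic (h ∘ m) -> perp k m.
Proof.
  intros Hk Hhm P p1 p2 HP.
  assert (Hp2 : zero_arrow p2).
  { apply (zero_arrow_of_monic_comp (h ∘ m)); [exact Hhm |].
    rewrite <- comp_assoc, <- (proj1 HP), comp_assoc. apply zero_arrow_precomp, (proj1 Hk). }
  assert (Hp1 : zero_arrow p1).
  { apply (zero_arrow_of_monic_comp k); [exact (kernel_monic k h Hk) |].
    rewrite (proj1 HP). apply zero_arrow_postcomp, Hp2. }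
  apply zero_obj_of_subterminal. intros Y u v.
  apply (pullback_jointly_monic HP); apply zero_arrow_unique; apply zero_arrow_precomp;
    assumption.
Qed.

Lemma essential_monic_normal_comp {I A B : C} (m : Hom C I A) (f : Hom C A B) :
  essential_monic m -> normal_monic (f ∘ m) -> monic f.
Proof. intros [_ Hess] Hfm. exact (Hess B f (normal_monic_monic _ Hfm)). Qed.

Lemma perp_normal_zero_of_normal_comp_monic {I J A : C} (m : Hom C I A) (g : Hom C J A) :
  normal_monic m -> (forall B (f : Hom C A B), normal_monic (f ∘ m) -> monic f) ->
  normal_monic g -> perp g m -> zero_arrow g.
Proof.
  intros [B' [psi Hm]] Hnormal [B [phi Hg]] Hperp.
  destruct (normal_quotient_of_perp g phi m psi Hg Hm Hperp) as [Q [q [Hqg Hqm]]].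
  exact (zero_arrow_of_monic_comp q g (Hnormal Q q Hqm) Hqg).
Qed.

Lemma essential_monic_of_perp_normal_zero {I A : C} (m : Hom C I A) :
  monic m -> (forall J (g : Hom C J A), normal_monic g -> perp g m -> zero_arrow g) ->
  essential_monic m.
Proof.
  intros Hm Hzero. split; [exact Hm |]. intros X h Hhm.
  destruct (kernel_exists h) as [K [k Hk]].
  assert (Hkz : zero_arrow k).
  { apply Hzero; [exists X, h; exact Hk | exact (perp_kernel_of_monic_comp k h m Hk Hhm)]. }
  apply monic_of_trivial_kernel. intros Y x Hx.
  destruct (kernel_factor Hk Hx) as [y Ey]. rewrite <- Ey. apply zero_arrow_precomp, Hkz.
Qed.

End SemiAbelian.

Theorem mainTheorem6 (C : Cat) (HC : semi_abelian C)
    (I A : C) (m : Hom C I A) (Hm : normal_monic m) :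
  (essential_monic m <->
     (forall (B : C) (f : Hom C A B), normal_monic (f ∘ m) -> monic f)) /\
  (essential_monic m <->
     (forall (J : C) (g : Hom C J A), normal_monic g -> perp g m -> zero_arrow g)).
Proof.
  destruct HC as [[Z HZ] [[[[_ Hpb] [Hcoeq Hstab]] Heff] [Hproto _]]].
  assert (H12 : essential_monic m ->
                forall B (f : Hom C A B), normal_monic (f ∘ m) -> monic f)
    by (intros Hess B f; exact (essential_monic_normal_comp C m f Hess)).
  assert (H23 : (forall B (f : Hom C A B), normal_monic (f ∘ m) -> monic f) ->
                forall J (g : Hom C J A), normal_monic g -> perp g m -> zero_arrow g)
    by (intros H2 J g; exact (perp_normal_zero_of_normal_comp_monic
                                C Z HZ Hpb Hproto Hcoeq Hstab Heff m g Hm H2)).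
  assert (H31 : (forall J (g : Hom C J A), normal_monic g -> perp g m -> zero_arrow g) ->
                essential_monic m)
    by exact (essential_monic_of_perp_normal_zero C Z HZ Hpb Hproto m (normal_monic_monic C m Hm)).
  split; split; auto.
Qed.
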